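(* Let $0<r<1$. In the RRH with redirection parameter $r$, for every $N\ge 1$, $$\mathbb{E}[\mathcal{R}_2(N)]=\frac{1}{r}\left[\frac{\Gamma(N+r)}{\Gamma(1+r)\,\Gamma(N)}-1\right],$$ and consequently $\mathbb{E}[\mathcal{R}_2(N)]\sim \dfrac{N^r}{r\,\Gamma(1+r)}$ as $N\to\infty$.
   Context: The RRH with redirection parameter $r\in[0,1)$ is the following random hypergraph process. At size $N=1$ it has vertex set $\{v_1\}$ and edge set $\{\{v_1\}\}$. Given the hypergraph of size $N$ (vertices $v_1,\dots,v_N$, $N$ edges), choose an existing edge $e$ uniformly at random and add a new vertex $v_{N+1}$ and one new edge, as follows. If $e=\{v_1\}$, the new edge is $\{v_1,v_{N+1}\}$. Otherwise write $e=\{v_{i_1},\dots,v_{i_n}\}$ with $1=i_1<\dots<i_n$, $n\ge2$; independently, with probability $1-r$ the new edge is $e\cup\{v_{N+1}\}$ and with probability $r$ it is $\{v_{i_1},\dots,v_{i_{n-1}},v_{N+1}\}$. $\mathcal{R}_k(N)$ denotes the number of edges of size $k$ at size $N$. *)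

From Stdlib Require Import Reals Lra List.
From Coquelicot Require Import Coquelicot.
Import ListNotations.
Open Scope R_scope.

Definition Gamma (x : R) : R :=
  RInt_gen (fun t => Rpower t (x - 1) * exp (- t))
           (at_right 0) (Rbar_locally p_infty).

(* A hypergraph: list of edges; vertex v_i is encoded by the natural number i;
   each edge is the increasing list of its vertex indices. *)
Definition hgraph := list (list nat).

(* A finitely supported probability distribution over hypergraphs:
   a list of (probability weight, outcome) pairs. *)
Definition hdist := list (R * hgraph).

(* One step of the RRH from size n (vertices 1..n, n edges) to size n+1:
   pick an edge e uniformly (prob 1/n each); the new vertex is n+1.
   If e = {v_1}: new edge {v_1, v_{n+1}}.
   Otherwise: with prob 1-r new edge e ∪ {v_{n+1}},
              with prob r new edge (e minus its largest vertex) ∪ {v_{n+1}}. *)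
Definition rrh_step (r : R) (n : nat) (H : hgraph) : hdist :=
  flat_map (fun e =>
    match e with
    | [1%nat] => [(/ INR n, H ++ [[1%nat; S n]])]
    | _ => [(/ INR n * (1 - r), H ++ [e ++ [S n]]);
            (/ INR n * r, H ++ [removelast e ++ [S n]])]
    end) H.

Definition dist_step (r : R) (n : nat) (D : hdist) : hdist :=
  flat_map (fun pH => map (fun qH' => (fst pH * fst qH', snd qH'))
                          (rrh_step r n (snd pH))) D.

Fixpoint rrh (r : R) (N : nat) : hdist :=
  match N with
  | O => []
  | S n => match n with
           | O => [(1, [[1%nat]])]
           | S _ => dist_step r n (rrh r n)
           end
  end.

Definition nedges (k : nat) (H : hgraph) : nat :=
  length (filter (fun e => Nat.eqb (length e) k) H).

Definition expect (D : hdist) (f : hgraph -> R) : R :=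
  fold_right (fun pH acc => fst pH * f (snd pH) + acc) 0 D.

Definition ER (r : R) (k N : nat) : R := expect (rrh r N) (fun H => INR (nedges k H)).

(* Every hypergraph reachable at size n consists of the
   edge {v_1} followed by n - 1 edges with at least two vertices.  Conditioning
   on the hypergraph at size n, choosing {v_1} creates a new 2-edge, while a
   long edge e creates an edge of size |e| + 1 or |e|, the latter with
   probability r.  Hence E[R_2(n+1)] = (1 + r/n) E[R_2(n)] + 1/n, with
   E[R_2(1)] = 0, whose solution is (prod_{j=1}^{n-1} (1 + r/j) - 1) / r.

   Gamma is the improper integral of t^(x-1) e^(-t); we prove it
   converges for x >= 1, that Gamma 1 = 1 and Gamma (x+1) = x Gamma x, which
   turns the product into Gamma (N + r) / (Gamma (1 + r) Gamma N).  Wendel's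
   inequality Gamma (x + s) <= x^s Gamma x (0 < s < 1), obtained from the
   convexity of exp under the integral, squeezes Gamma (N + r) / (Gamma N N^r)
   between N / (N + r) and 1, which gives the asymptotics. *)

From Stdlib Require Import Reals Lra Lia List.
From Coquelicot Require Import Coquelicot.
Import ListNotations.
Open Scope R_scope.

Lemma expect_app (D1 D2 : hdist) (f : hgraph -> R) :
  expect (D1 ++ D2) f = expect D1 f + expect D2 f.
Proof. induction D1 as [|[p H] D IH]; simpl; [lra|]. rewrite IH; lra. Qed.

Lemma expect_scal_weights (p : R) (D : hdist) (f : hgraph -> R) :
  expect (map (fun qH => (p * fst qH, snd qH)) D) f = p * expect D f.
Proof. induction D as [|[q H] D IH]; simpl; [lra|]. rewrite IH; simpl; ring. Qed.

Lemma expect_affine (D : hdist) (f : hgraph -> R) (a b : R) :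
  expect D (fun H => a * f H + b) = a * expect D f + b * expect D (fun _ => 1).
Proof. induction D as [|[p H] D IH]; simpl; [ring|]. rewrite IH; ring. Qed.

Lemma expect_ext_on (P : hgraph -> Prop) (D : hdist) (f g : hgraph -> R) :
  List.Forall (fun pH => P (snd pH)) D -> (forall H, P H -> f H = g H) ->
  expect D f = expect D g.
Proof.
  intros HD Hfg. induction HD as [|pH D HH _ IH]; [reflexivity|].
  destruct pH as [p H]; simpl in *. rewrite IH, (Hfg H HH). reflexivity.
Qed.

Lemma expect_dist_step (r : R) (n : nat) (D : hdist) (f : hgraph -> R) :
  expect (dist_step r n D) f = expect D (fun H => expect (rrh_step r n H) f).
Proof.
  induction D as [|[p H] D IH]; simpl; [reflexivity|].
  unfold dist_step in *. simpl. rewrite expect_app, expect_scal_weights, IH. reflexivity.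
Qed.

Lemma forall_dist_step (r : R) (n : nat) (P Q : hgraph -> Prop) (D : hdist) :
  (forall H, P H -> List.Forall (fun pH => Q (snd pH)) (rrh_step r n H)) ->
  List.Forall (fun pH => P (snd pH)) D -> List.Forall (fun pH => Q (snd pH)) (dist_step r n D).
Proof.
  intros Hstep HD. induction HD as [|pH D HH _ IH]; [constructor|].
  destruct pH as [p H]. unfold dist_step in *. simpl in *. apply Forall_app; split; [|exact IH].
  apply Forall_map. exact (Hstep H HH).
Qed.

Definition shaped (n : nat) (H : hgraph) : Prop :=
  exists T, H = [1%nat] :: T /\ length H = n /\ List.Forall (fun e => (2 <= length e)%nat) T.

Definition edge_step (r : R) (n : nat) (H : hgraph) (e : list nat) : hdist :=
  match e with
  | [1%nat] => [(/ INR n, H ++ [[1%nat; S n]])]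
  | _ => [(/ INR n * (1 - r), H ++ [e ++ [S n]]);
          (/ INR n * r, H ++ [removelast e ++ [S n]])]
  end.

Lemma rrh_step_edges (r : R) (n : nat) (H : hgraph) :
  rrh_step r n H = flat_map (edge_step r n H) H.
Proof. reflexivity. Qed.

Lemma edge_step_long (r : R) (n : nat) (H : hgraph) (e : list nat) :
  (2 <= length e)%nat ->
  edge_step r n H e = [(/ INR n * (1 - r), H ++ [e ++ [S n]]);
                       (/ INR n * r, H ++ [removelast e ++ [S n]])].
Proof.
  intros Hl. destruct e as [|a [|b rest]]; simpl in Hl; try lia.
  destruct a as [|[|a]]; reflexivity.
Qed.

Lemma length_removelast (l : list nat) : length (removelast l) = pred (length l).
Proof. rewrite removelast_firstn_len, length_firstn. lia. Qed.

Lemma long_edges_step_shape (r : R) (n : nat) (H : hgraph) (T : list (list nat)) :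
  List.Forall (fun e => (2 <= length e)%nat) T ->
  List.Forall (fun pH => exists e, snd pH = H ++ [e] /\ (2 <= length e)%nat)
         (flat_map (edge_step r n H) T).
Proof.
  induction 1 as [|e T He _ IH]; simpl; [constructor|].
  rewrite edge_step_long by exact He.
  apply Forall_app; split; [|exact IH].
  repeat constructor.
  - exists (e ++ [S n]). rewrite length_app; simpl. split; [reflexivity | lia].
  - exists (removelast e ++ [S n]). rewrite length_app, length_removelast; simpl.
    split; [reflexivity | lia].
Qed.

Lemma rrh_step_shape (r : R) (n : nat) (H : hgraph) :
  shaped n H -> List.Forall (fun pH => shaped (S n) (snd pH)) (rrh_step r n H).
Proof.
  intros (T & -> & Hlen & HT). simpl in Hlen.
  rewrite rrh_step_edges. simpl. constructor.
  - exists (T ++ [[1%nat; S n]]).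
    split; [reflexivity|]. split; [simpl; rewrite length_app; simpl; lia|].
    apply Forall_app; split; auto.
  - eapply Forall_impl; [|exact (long_edges_step_shape r n ([1%nat] :: T) T HT)].
    intros [p H'] (e & He & Hle). simpl in He |- *. subst H'.
    exists (T ++ [e]).
    split; [reflexivity|]. split; [simpl; rewrite length_app; simpl; lia|].
    apply Forall_app; split; auto.
Qed.

Lemma rrh_shape (r : R) (m : nat) : List.Forall (fun pH => shaped (S m) (snd pH)) (rrh r (S m)).
Proof.
  induction m as [|m IH].
  - repeat constructor. exists []. simpl. auto.
  - exact (forall_dist_step r (S m) _ _ _ (rrh_step_shape r (S m)) IH).
Qed.

Definition size2 (H : hgraph) : R := INR (nedges 2 H).

Lemma nedges_snoc (k : nat) (H : hgraph) (e : list nat) :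
  nedges k (H ++ [e]) = (nedges k H + if Nat.eqb (length e) k then 1 else 0)%nat.
Proof. unfold nedges. rewrite filter_app, length_app. simpl. destruct (Nat.eqb _ k); reflexivity. Qed.

Lemma long_edges_step_mass (r : R) (n : nat) (H : hgraph) (T : list (list nat)) :
  List.Forall (fun e => (2 <= length e)%nat) T ->
  expect (flat_map (edge_step r n H) T) (fun _ => 1) = / INR n * INR (length T).
Proof.
  induction 1 as [|e T He _ IH]; [simpl; ring|].
  simpl flat_map. rewrite edge_step_long, expect_app, IH by exact He.
  rewrite length_cons, S_INR. simpl. ring.
Qed.

(* Each long edge [e], when chosen, leaves [R_2] unchanged with probability
   [1 - r] and adds [[|e| = 2]] with probability [r]. *)
Lemma long_edges_step_size2 (r : R) (n : nat) (H : hgraph) (T : list (list nat)) :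
  List.Forall (fun e => (2 <= length e)%nat) T ->
  expect (flat_map (edge_step r n H) T) size2
  = / INR n * (INR (length T) * size2 H + r * INR (nedges 2 T)).
Proof.
  induction 1 as [|e T He _ IH]; [simpl; ring|].
  simpl flat_map. rewrite edge_step_long, expect_app, IH by exact He.
  assert (Hcons : nedges 2 (e :: T) = (nedges 2 T + if Nat.eqb (length e) 2 then 1 else 0)%nat).
  { unfold nedges. simpl. destruct (Nat.eqb (length e) 2); simpl; lia. }
  assert (Hlong : Nat.eqb (length (e ++ [S n])) 2 = false)
    by (apply Nat.eqb_neq; rewrite length_app; simpl; lia).
  assert (Hcut : length (removelast e ++ [S n]) = length e)
    by (rewrite length_app, length_removelast; simpl; lia).
  unfold size2. cbn [expect fold_right fst snd].
  rewrite !nedges_snoc, Hlong, Hcut, Hcons, Nat.add_0_r, !plus_INR.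
  change (length (e :: T)) with (S (length T)). rewrite S_INR. ring.
Qed.

Lemma rrh_step_mass (r : R) (n : nat) (H : hgraph) :
  shaped n H -> expect (rrh_step r n H) (fun _ => 1) = 1.
Proof.
  intros (T & -> & Hlen & HT). simpl in Hlen. subst n.
  rewrite rrh_step_edges. cbn [flat_map]. rewrite expect_app, long_edges_step_mass by exact HT.
  cbn -[INR]. rewrite S_INR. field. rewrite <- S_INR. apply not_0_INR. lia.
Qed.

Lemma rrh_step_size2 (r : R) (n : nat) (H : hgraph) :
  shaped n H -> expect (rrh_step r n H) size2 = (1 + r / INR n) * size2 H + / INR n.
Proof.
  intros (T & -> & Hlen & HT). simpl in Hlen. subst n.
  rewrite rrh_step_edges. cbn [flat_map]. rewrite expect_app, long_edges_step_size2 by exact HT.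
  assert (Hfirst : forall L, size2 ([1%nat] :: L) = INR (nedges 2 L)) by reflexivity.
  cbn -[INR size2]. rewrite !Hfirst, nedges_snoc, plus_INR, S_INR. cbn -[INR]. rewrite INR_1.
  field. rewrite <- S_INR. apply not_0_INR. lia.
Qed.

Lemma rrh_mass (r : R) (m : nat) : expect (rrh r (S m)) (fun _ => 1) = 1.
Proof.
  induction m as [|m IH]; [simpl; ring|].
  change (rrh r (S (S m))) with (dist_step r (S m) (rrh r (S m))).
  rewrite expect_dist_step, (expect_ext_on (shaped (S m)) _ _ (fun _ => 1));
    [exact IH | apply rrh_shape | apply rrh_step_mass].
Qed.

Lemma ER_one (r : R) : ER r 2 1 = 0.
Proof. unfold ER, nedges. simpl. ring. Qed.

Lemma ER_succ (r : R) (m : nat) :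
  ER r 2 (S (S m)) = (1 + r / INR (S m)) * ER r 2 (S m) + / INR (S m).
Proof.
  unfold ER. fold size2.
  change (rrh r (S (S m))) with (dist_step r (S m) (rrh r (S m))).
  rewrite expect_dist_step, (expect_ext_on (shaped (S m)) _ _
    (fun H => (1 + r / INR (S m)) * size2 H + / INR (S m)));
    [|apply rrh_shape | apply rrh_step_size2].
  rewrite expect_affine, rrh_mass. ring.
Qed.

Fixpoint growth (r : R) (k : nat) : R :=
  match k with
  | O => 1
  | S k' => growth r k' * (1 + r / INR (S k'))
  end.

Lemma ER_closed_form (r : R) (k : nat) : r <> 0 -> ER r 2 (S k) = (growth r k - 1) / r.
Proof.
  intros Hr. induction k as [|k IH].
  - rewrite ER_one. simpl. field. exact Hr.
  - rewrite ER_succ, IH. cbn -[INR]. field. split; [apply not_0_INR; lia | exact Hr].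
Qed.

Local Notation at_zero := (at_right 0).
Local Notation at_infty := (Rbar_locally p_infty).

Lemma exp_monotone (x y : R) : x <= y -> exp x <= exp y.
Proof. intros [Hlt|<-]; [left; apply exp_increasing, Hlt | right; reflexivity]. Qed.

Lemma ex_derive_continuous_R (g : R -> R) (x : R) : ex_derive g x -> continuous g x.
Proof. apply (@ex_derive_continuous R_AbsRing R_NormedModule). Qed.

Lemma Rpower_pos (x y : R) : 0 < Rpower x y.
Proof. apply exp_pos. Qed.

Lemma exp_half_le_inv (B : R) : 0 < B -> exp (- B / 2) <= 2 / B.
Proof.
  intros HB. pose proof (exp_ineq1_le (B / 2)). pose proof (exp_pos (B / 2)).
  replace (- B / 2) with (- (B / 2)) by field. rewrite exp_Ropp.
  apply (Rmult_le_reg_r (exp (B / 2) * B)); [nra|].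
  field_simplify; [nra | lra | lra].
Qed.

Lemma power_exp_bound (y : R) : 0 <= y ->
  exists K, 0 < K /\ forall t, 0 < t -> Rpower t y * exp (- t) <= K * exp (- t / 2).
Proof.
  intros Hy. set (c := 2 * y + 2).
  exists (exp (y * (ln c - 1))). split; [apply exp_pos|].
  intros t Ht. unfold Rpower. rewrite <- !exp_plus. apply exp_monotone.
  assert (Hln : ln t <= t / c - 1 + ln c).
  { pose proof (exp_ineq1_le (ln (t / c))) as Hexp.
    rewrite exp_ln, ln_div in Hexp by (unfold c; try apply Rdiv_lt_0_compat; lra). lra. }
  assert (y * ln t <= y * (t / c - 1 + ln c)) by (apply Rmult_le_compat_l; lra).
  assert (y * (t / c) <= t / 2).
  { unfold c. apply (Rmult_le_reg_r (2 * y + 2)); [lra|]. field_simplify; [nra | lra]. }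
  nra.
Qed.

Lemma exp_convex (L s : R) : 0 < s < 1 -> exp (s * L) <= 1 - s + s * exp L.
Proof.
  intros Hs. set (A := exp (s * L)). assert (HA : 0 < A) by apply exp_pos.
  pose proof (exp_ineq1_le ((1 - s) * L)) as H1.
  pose proof (exp_ineq1_le (- (s * L))) as H2.
  assert (E1 : exp L = A * exp ((1 - s) * L))
    by (unfold A; rewrite <- exp_plus; f_equal; ring).
  assert (E2 : 1 = A * exp (- (s * L)))
    by (unfold A; rewrite <- exp_plus, <- exp_0; f_equal; ring).
  assert (A * (1 + (1 - s) * L) <= exp L) by (rewrite E1; apply Rmult_le_compat_l; lra).
  assert (A * (1 + - (s * L)) <= 1) by (rewrite E2 at 2; apply Rmult_le_compat_l; lra).
  nra.
Qed.

Lemma eventually_ordered_bounds :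
  filter_prod at_zero at_infty (fun ab => 0 < fst ab <= snd ab).
Proof.
  apply (Filter_prod _ _ _ (fun a => 0 < a < 1) (fun b => 1 < b)).
  - exists (mkposreal 1 Rlt_0_1). intros y Hy Hy0. change (Rabs (y - 0) < 1) in Hy.
    rewrite Rminus_0_r in Hy. apply Rabs_def2 in Hy. lra.
  - exists 1. auto.
  - intros x y Hx Hy. simpl. lra.
Qed.

(* A function continuous on [(0, +oo)] and dominated by [K exp (-t/2)] has an
   improper integral there: the partial integrals form a Cauchy net. *)
Section DominatedIntegral.

Variables (f : R -> R) (K : R).
Hypothesis K_pos : 0 < K.
Hypothesis f_cont : forall t, 0 < t -> continuous f t.
Hypothesis f_dom : forall t, 0 < t -> Rabs (f t) <= K * exp (- t / 2).

Lemma ex_RInt_dom (a b : R) : 0 < a -> 0 < b -> ex_RInt f a b.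
Proof.
  intros Ha Hb. apply (@ex_RInt_continuous R_CompleteNormedModule).
  intros z Hz. apply f_cont. pose proof (Rmin_glb_lt a b 0 Ha Hb). lra.
Qed.

Lemma RInt_swap_dom (a b : R) : 0 < a -> 0 < b -> RInt f a b = - RInt f b a.
Proof.
  intros Ha Hb. symmetry.
  exact (@opp_RInt_swap R_CompleteNormedModule f b a (ex_RInt_dom b a Hb Ha)).
Qed.

(* Since [|f| <= K], integrals over short intervals are small. *)
Lemma RInt_dom_short (a a' : R) : 0 < a -> 0 < a' -> Rabs (RInt f a a') <= Rabs (a' - a) * K.
Proof.
  assert (Hordered : forall u v, 0 < u -> u <= v -> Rabs (RInt f u v) <= (v - u) * K).
  { intros x x' Hx Hle. apply abs_RInt_le_const; [exact Hle | apply ex_RInt_dom; lra|].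
    intros t Ht. eapply Rle_trans; [apply f_dom; lra|].
    rewrite <- (Rmult_1_r K) at 2. apply Rmult_le_compat_l; [lra|].
    rewrite <- exp_0. apply exp_monotone. lra. }
  intros Ha Ha'. destruct (Rle_dec a a').
  - rewrite (Rabs_right (a' - a)) by lra. apply Hordered; lra.
  - rewrite RInt_swap_dom, Rabs_Ropp, (Rabs_left (a' - a)) by lra.
    replace (- (a' - a)) with (a - a') by ring. apply Hordered; lra.
Qed.

(* Beyond [B], the integral of the dominating function is [2 K exp (-B/2)]. *)
Lemma RInt_dom_tail_ordered (B b b' : R) : 0 < B -> B <= b -> b <= b' ->
  Rabs (RInt f b b') <= 2 * K * exp (- B / 2).
Proof.
  intros HB Hb Hle.
  assert (Hmaj : is_RInt (fun t => K * exp (- t / 2)) b b'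
                   (2 * K * (exp (- b / 2) - exp (- b' / 2)))).
  { replace (2 * K * (exp (- b / 2) - exp (- b' / 2)))
      with (minus (- 2 * K * exp (- b' / 2)) (- 2 * K * exp (- b / 2)))
      by (unfold minus, plus, opp; simpl; ring).
    apply (@is_RInt_derive R_CompleteNormedModule (fun t => - 2 * K * exp (- t / 2))).
    - intros x _. auto_derive; [exact I | unfold Rdiv; field].
    - intros z _. apply ex_derive_continuous_R. auto_derive. exact I. }
  eapply Rle_trans; [apply abs_RInt_le; [exact Hle | apply ex_RInt_dom; lra]|].
  eapply Rle_trans.
  { apply (RInt_le _ (fun t => K * exp (- t / 2))); [exact Hle | | eexists; exact Hmaj |].
    - apply (@ex_RInt_continuous R_CompleteNormedModule). intros z Hz.
      apply continuous_comp; [|apply continuous_Rabs]. apply f_cont.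
      rewrite Rmin_left in Hz by exact Hle. lra.
    - intros x Hx. apply f_dom. lra. }
  rewrite (is_RInt_unique _ _ _ _ Hmaj).
  pose proof (exp_pos (- b' / 2)).
  assert (exp (- b / 2) <= exp (- B / 2)) by (apply exp_monotone; lra).
  nra.
Qed.

Lemma RInt_dom_tail (B b b' : R) : 0 < B -> B <= b -> B <= b' ->
  Rabs (RInt f b b') <= 2 * K * exp (- B / 2).
Proof.
  intros HB Hb Hb'. destruct (Rle_dec b b').
  - apply RInt_dom_tail_ordered; lra.
  - rewrite RInt_swap_dom, Rabs_Ropp by lra. apply RInt_dom_tail_ordered; lra.
Qed.

Lemma RInt_dom_cauchy (eps : posreal) :
  exists P, filter_prod at_zero at_infty P /\
    forall u v : R * R, P u -> P v -> Rabs (RInt f (fst v) (snd v) - RInt f (fst u) (snd u)) < eps.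
Proof.
  set (d := eps / (4 * K)). set (B := 16 * K / eps). pose proof (cond_pos eps).
  assert (Hd : 0 < d) by (unfold d; apply Rdiv_lt_0_compat; lra).
  assert (HB : 0 < B) by (unfold B; apply Rdiv_lt_0_compat; lra).
  exists (fun ab => (0 < fst ab < d) /\ B < snd ab). split.
  - apply (Filter_prod _ _ _ (fun a => 0 < a < d) (fun b => B < b)).
    + exists (mkposreal d Hd). intros y Hy Hy0. change (Rabs (y - 0) < d) in Hy.
      rewrite Rminus_0_r in Hy. apply Rabs_def2 in Hy. simpl in *. lra.
    + exists B. auto.
    + simpl. auto.
  - intros [a b] [a' b'] [Ha Hb] [Ha' Hb']. simpl in *.
    assert (Hsplit : RInt f a' b' - RInt f a b = RInt f a' a + RInt f b b').
    { pose proof (RInt_Chasles (V := R_CompleteNormedModule) f a' a b'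
        ltac:(apply ex_RInt_dom; lra) ltac:(apply ex_RInt_dom; lra)) as C1.
      pose proof (RInt_Chasles (V := R_CompleteNormedModule) f a b b'
        ltac:(apply ex_RInt_dom; lra) ltac:(apply ex_RInt_dom; lra)) as C2.
      unfold plus in C1, C2; simpl in C1, C2. lra. }
    rewrite Hsplit. eapply Rle_lt_trans; [apply Rabs_triang|].
    assert (Rabs (RInt f a' a) <= eps / 4).
    { eapply Rle_trans; [apply RInt_dom_short; lra|].
      replace (eps / 4) with (d * K) by (unfold d; field; lra).
      apply Rmult_le_compat_r; [lra|]. apply Rabs_le. lra. }
    assert (Rabs (RInt f b b') <= eps / 4).
    { eapply Rle_trans; [apply (RInt_dom_tail B); lra|].
      eapply Rle_trans; [apply Rmult_le_compat_l; [lra | apply exp_half_le_inv, HB]|].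
      unfold B. right. field. lra. }
    lra.
Qed.

Lemma ex_RInt_gen_dom : ex_RInt_gen f at_zero at_infty.
Proof.
  set (I := fun ab : R * R => RInt f (fst ab) (snd ab)).
  assert (HP : ProperFilter (filter_prod at_zero at_infty)) by apply Hierarchy.filter_prod_proper.
  destruct (proj1 (@Hierarchy.filterlim_locally_cauchy _ R_CompleteSpace _ HP I)) as [l Hl].
  { exact RInt_dom_cauchy. }
  exists l. intros P HPl. specialize (Hl P HPl). unfold filtermap in Hl. unfold filtermapi.
  generalize (filter_and (F := filter_prod at_zero at_infty) (fun ab => P (I ab)) _
                Hl eventually_ordered_bounds).
  apply filter_imp.
  intros [a b] [HPa Hab]. simpl in *. exists (I (a, b)). split; [|exact HPa].
  apply (RInt_correct (V := R_CompleteNormedModule)), ex_RInt_dom; lra.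
Qed.

End DominatedIntegral.

Lemma is_RInt_gen_antiderivative (h g : R -> R) (la lb : R) :
  (forall t, 0 < t -> is_derive h t (g t)) -> (forall t, 0 < t -> continuous g t) ->
  filterlim h at_zero (locally la) -> filterlim h at_infty (locally lb) ->
  is_RInt_gen g at_zero at_infty (lb - la).
Proof.
  intros Hd Hc Ha Hb.
  assert (Hinside : filter_prod at_zero at_infty
                      (fun ab => forall x, Rmin (fst ab) (snd ab) <= x -> 0 < x)).
  { generalize eventually_ordered_bounds. apply filter_imp. intros [a b] Hab x Hx. simpl in *.
    rewrite Rmin_left in Hx by lra. lra. }
  apply (is_RInt_gen_ext (Derive h)).
  { generalize Hinside. apply filter_imp. intros ab Hab x Hx. apply is_derive_unique, Hd, Hab. lra. }
  apply is_RInt_gen_Derive; [| | exact Ha | exact Hb].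
  - generalize Hinside. apply filter_imp. intros ab Hab x Hx. eexists. apply Hd, Hab. lra.
  - generalize Hinside. apply filter_imp. intros ab Hab x Hx. specialize (Hab x ltac:(lra)).
    apply (continuous_ext_loc _ g); [| apply Hc, Hab].
    exists (mkposreal x Hab). intros u Hu. change (Rabs (u - x) < x) in Hu.
    apply Rabs_def2 in Hu. symmetry. apply is_derive_unique, Hd. lra.
Qed.

Lemma lim_at_zero_of_bound (h : R -> R) (l : R) :
  (forall t, 0 < t < 1 -> Rabs (h t - l) <= t) -> filterlim h at_zero (locally l).
Proof.
  intros Hh. apply filterlim_locally. intros eps.
  exists (mkposreal (Rmin eps 1) (Rmin_pos _ _ (cond_pos eps) Rlt_0_1)).
  intros y Hy Hy0. change (Rabs (y - 0) < Rmin eps 1) in Hy. rewrite Rminus_0_r in Hy.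
  apply Rabs_def2 in Hy. pose proof (Rmin_l eps 1). pose proof (Rmin_r eps 1).
  change (Rabs (h y - l) < eps). eapply Rle_lt_trans; [apply Hh|]; lra.
Qed.

Lemma lim_at_infty_of_dom (h : R -> R) (C : R) : 0 < C ->
  (forall t, 0 < t -> Rabs (h t) <= C * exp (- t / 2)) -> filterlim h at_infty (locally 0).
Proof.
  intros HC Hh. apply filterlim_locally. intros eps. pose proof (cond_pos eps).
  assert (H4 : 0 < 4 * C / eps) by (apply Rdiv_lt_0_compat; lra).
  exists (4 * C / eps). intros t Ht.
  change (Rabs (h t - 0) < eps). rewrite Rminus_0_r.
  eapply Rle_lt_trans; [apply Hh; lra|].
  eapply Rle_lt_trans; [apply Rmult_le_compat_l; [lra | apply exp_half_le_inv; lra]|].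
  assert (4 * C < t * eps).
  { replace (4 * C) with (4 * C / eps * eps) by (field; lra). apply Rmult_lt_compat_r; lra. }
  apply (Rmult_lt_reg_r t); [lra|]. replace (C * (2 / t) * t) with (2 * C) by (field; lra). nra.
Qed.

Definition gamma_integrand (x t : R) : R := Rpower t (x - 1) * exp (- t).

Lemma gamma_integrand_pos (x t : R) : 0 < gamma_integrand x t.
Proof. apply Rmult_lt_0_compat; apply exp_pos. Qed.

Lemma gamma_integrand_continuous (x t : R) : 0 < t -> continuous (gamma_integrand x) t.
Proof. intros Ht. apply ex_derive_continuous_R. unfold gamma_integrand, Rpower. auto_derive. lra. Qed.

(* For [x >= 1] the integrand is bounded near [0], so the integral converges. *)
Lemma Gamma_correct (x : R) : 1 <= x -> is_RInt_gen (gamma_integrand x) at_zero at_infty (Gamma x).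
Proof.
  intros Hx. destruct (power_exp_bound (x - 1)) as [K [HK Hbound]]; [lra|].
  apply (RInt_gen_correct (V := R_CompleteNormedModule)).
  apply (ex_RInt_gen_dom _ K HK); [apply gamma_integrand_continuous|].
  intros t Ht. rewrite Rabs_right by (left; apply gamma_integrand_pos). apply Hbound, Ht.
Qed.

Lemma Gamma_1 : Gamma 1 = 1.
Proof.
  unfold Gamma. apply (is_RInt_gen_unique (V := R_CompleteNormedModule)).
  change (is_RInt_gen (gamma_integrand 1) at_zero at_infty 1).
  apply (is_RInt_gen_ext (fun t => exp (- t))).
  { apply filter_forall. intros ab x _. unfold gamma_integrand, Rpower.
    replace (1 - 1) with 0 by ring. rewrite Rmult_0_l, exp_0, Rmult_1_l. reflexivity. }
  replace 1 with (0 - (-1)) by ring.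
  apply (is_RInt_gen_antiderivative (fun t => - exp (- t))).
  - intros t _. auto_derive; [exact I | ring].
  - intros t _. apply ex_derive_continuous_R. auto_derive. exact I.
  - apply lim_at_zero_of_bound. intros t Ht. pose proof (exp_ineq1_le (- t)).
    assert (exp (- t) <= 1) by (rewrite <- exp_0; apply exp_monotone; lra).
    rewrite Rabs_right by lra. lra.
  - apply (lim_at_infty_of_dom _ 1 Rlt_0_1). intros t Ht.
    rewrite Rabs_Ropp, Rabs_right, Rmult_1_l by (left; apply exp_pos).
    apply exp_monotone. lra.
Qed.

(* Integration by parts: [Gamma (x + 1) = x Gamma x]. *)
Lemma Gamma_succ (x : R) : 1 <= x -> Gamma (x + 1) = x * Gamma x.
Proof.
  intros Hx.
  assert (Hparts : is_RInt_gen (fun t => gamma_integrand (x + 1) t - x * gamma_integrand x t)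
                     at_zero at_infty (0 - 0)).
  { apply (is_RInt_gen_antiderivative (fun t => - (Rpower t x * exp (- t)))).
    - intros t Ht. unfold gamma_integrand, Rpower. auto_derive; [lra|].
      replace (x + 1 - 1) with x by ring.
      replace ((x - 1) * ln t) with (x * ln t + - ln t) by ring.
      rewrite exp_plus, (exp_Ropp (ln t)), exp_ln by exact Ht. field. lra.
    - intros t Ht. apply ex_derive_continuous_R. unfold gamma_integrand, Rpower. auto_derive. lra.
    - apply lim_at_zero_of_bound. intros t Ht. rewrite Rminus_0_r, Rabs_Ropp.
      pose proof (Rpower_pos t x). pose proof (exp_pos (- t)).
      rewrite Rabs_right by (left; apply Rmult_lt_0_compat; assumption).
      assert (exp (- t) <= 1) by (rewrite <- exp_0; apply exp_monotone; lra).
      assert (Rpower t x <= t).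
      { unfold Rpower. rewrite <- (exp_ln t) at 2 by lra. apply exp_monotone.
        assert (ln t < 0) by (rewrite <- ln_1; apply ln_increasing; lra). nra. }
      nra.
    - destruct (power_exp_bound x) as [K [HK Hbound]]; [lra|].
      apply (lim_at_infty_of_dom _ K HK). intros t Ht. rewrite Rabs_Ropp, Rabs_right.
      + apply Hbound, Ht.
      + left. apply Rmult_lt_0_compat; [apply Rpower_pos | apply exp_pos]. }
  pose proof (is_RInt_gen_plus _ _ _ _ Hparts
                (is_RInt_gen_scal _ x _ (Gamma_correct x Hx))) as Hsum.
  unfold Gamma at 1. apply (is_RInt_gen_unique (V := R_CompleteNormedModule)).
  change (is_RInt_gen (gamma_integrand (x + 1)) at_zero at_infty (x * Gamma x)).
  replace (x * Gamma x) with (plus (0 - 0) (scal x (Gamma x)))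
    by (unfold plus, scal; simpl; unfold mult; simpl; ring).
  refine (is_RInt_gen_ext _ _ _ _ Hsum).
  apply filter_forall. intros ab y _. unfold plus, scal; simpl. unfold mult; simpl. ring.
Qed.

(* Pointwise inequality behind Wendel's inequality:
   [t^s <= (1 - s) x^s + s x^(s-1) t], by convexity of [exp]. *)
Lemma gamma_integrand_interpolation (x s t : R) : 0 < x -> 0 < t -> 0 < s < 1 ->
  gamma_integrand (x + s) t
  <= (1 - s) * Rpower x s * gamma_integrand x t + s * Rpower x (s - 1) * gamma_integrand (x + 1) t.
Proof.
  intros Hx Ht Hs. unfold gamma_integrand, Rpower.
  set (a := ln x). set (b := ln t).
  assert (Hpow : exp (s * b) <= (1 - s) * exp (s * a) + s * (exp ((s - 1) * a) * exp b)).
  { pose proof (exp_convex (b - a) s Hs) as Hconv. pose proof (exp_pos (s * a)).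
    replace (exp (s * b)) with (exp (s * a) * exp (s * (b - a)))
      by (rewrite <- exp_plus; f_equal; ring).
    replace (exp ((s - 1) * a) * exp b) with (exp (s * a) * exp (b - a))
      by (rewrite <- !exp_plus; f_equal; ring).
    nra. }
  replace (exp ((x + s - 1) * b)) with (exp ((x - 1) * b) * exp (s * b))
    by (rewrite <- exp_plus; f_equal; ring).
  replace (exp ((x + 1 - 1) * b)) with (exp ((x - 1) * b) * exp b)
    by (rewrite <- exp_plus; f_equal; ring).
  assert (0 < exp ((x - 1) * b) * exp (- t)) by (apply Rmult_lt_0_compat; apply exp_pos).
  nra.
Qed.

Lemma Gamma_wendel (x s : R) : 1 <= x -> 0 < s < 1 -> Gamma (x + s) <= Rpower x s * Gamma x.
Proof.
  intros Hx Hs.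
  pose proof (Gamma_correct x Hx) as Hg0.
  pose proof (Gamma_correct (x + 1) ltac:(lra)) as Hg1.
  pose proof (is_RInt_gen_plus _ _ _ _ (is_RInt_gen_scal _ ((1 - s) * Rpower x s) _ Hg0)
                (is_RInt_gen_scal _ (s * Rpower x (s - 1)) _ Hg1)) as Hmaj.
  assert (Hord : filter_prod at_zero at_infty (fun ab : R * R => fst ab <= snd ab)).
  { generalize eventually_ordered_bounds. apply filter_imp. intros ab Hab. lra. }
  assert (Hle : filter_prod at_zero at_infty (fun ab : R * R =>
      forall y, fst ab <= y <= snd ab ->
        norm (gamma_integrand (x + s) y)
        <= plus (scal ((1 - s) * Rpower x s) (gamma_integrand x y))
                (scal (s * Rpower x (s - 1)) (gamma_integrand (x + 1) y)))).
  { generalize eventually_ordered_bounds. apply filter_imp. intros ab Hab y Hy.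
    unfold norm, plus, scal; simpl. unfold abs, mult; simpl.
    rewrite Rabs_right by (left; apply gamma_integrand_pos).
    apply gamma_integrand_interpolation; lra. }
  pose proof (RInt_gen_norm (V := R_CompleteNormedModule) _ _ _ _ Hord Hle
                (Gamma_correct (x + s) ltac:(lra)) Hmaj) as Hint.
  unfold norm, plus, scal in Hint; simpl in Hint. unfold abs, mult in Hint; simpl in Hint.
  rewrite Gamma_succ in Hint by lra.
  assert (Hx1 : s * Rpower x (s - 1) * (x * Gamma x) = s * Rpower x s * Gamma x).
  { unfold Rpower. replace (exp (s * ln x)) with (exp ((s - 1) * ln x) * exp (ln x))
      by (rewrite <- exp_plus; f_equal; ring).
    rewrite exp_ln by lra. ring. }
  pose proof (Rle_abs (Gamma (x + s))). lra.
Qed.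

Lemma Gamma_nat_pos (k : nat) : 0 < Gamma (INR (S k)).
Proof.
  induction k as [|k IH].
  - rewrite INR_1, Gamma_1. lra.
  - rewrite S_INR, Gamma_succ; [|rewrite S_INR; pose proof (pos_INR k); lra].
    apply Rmult_lt_0_compat; [apply lt_0_INR; lia | exact IH].
Qed.

(* Positivity of [Gamma (1 + r)], from Wendel's inequality between [1 + r] and [2]. *)
Lemma Gamma_1r_pos (r : R) : 0 < r < 1 -> 0 < Gamma (1 + r).
Proof.
  intros Hr. pose proof (Gamma_wendel (1 + r) (1 - r) ltac:(lra) ltac:(lra)) as Hw.
  replace (1 + r + (1 - r)) with (1 + 1) in Hw by ring.
  rewrite Gamma_succ, Gamma_1 in Hw by lra.
  pose proof (Rpower_pos (1 + r) (1 - r)).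
  destruct (Rle_lt_dec (Gamma (1 + r)) 0); [nra | assumption].
Qed.

(* The functional equation telescopes: [Gamma (k + 1 + r) = growth r k Gamma (1 + r) k!]. *)
Lemma Gamma_growth (r : R) (k : nat) : 0 < r ->
  Gamma (INR (S k) + r) = growth r k * Gamma (1 + r) * Gamma (INR (S k)).
Proof.
  intros Hr. induction k as [|k IH].
  - rewrite INR_1, Gamma_1. simpl. ring.
  - pose proof (pos_INR k) as Hk.
    replace (INR (S (S k)) + r) with ((INR (S k) + r) + 1) by (rewrite (S_INR (S k)); ring).
    rewrite Gamma_succ, IH by (rewrite S_INR; lra).
    rewrite (S_INR (S k)), Gamma_succ by (rewrite S_INR; lra).
    cbn -[INR]. field. rewrite S_INR. lra.
Qed.

(* The squeeze [x / (x + r) <= Gamma (x + r) / (Gamma x x^r) <= 1], from Wendel's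
   inequality applied at [x] with step [r] and at [x + r] with step [1 - r]. *)
Lemma Gamma_ratio_bounds (x r : R) : 1 <= x -> 0 < r < 1 -> 0 < Gamma x ->
  1 - r / (x + r) <= Gamma (x + r) / (Gamma x * Rpower x r) <= 1.
Proof.
  intros Hx Hr Hg.
  pose proof (Gamma_wendel x r Hx Hr) as Hupper.
  pose proof (Gamma_wendel (x + r) (1 - r) ltac:(lra) ltac:(lra)) as Hlower.
  replace (x + r + (1 - r)) with (x + 1) in Hlower by ring.
  rewrite Gamma_succ in Hlower by lra.
  set (G := Gamma (x + r)) in *. set (g := Gamma x) in *.
  set (p := Rpower x r) in *. set (P1 := Rpower (x + r) (1 - r)) in *.
  set (P2 := Rpower (x + r) r).
  assert (Hp : 0 < p) by apply Rpower_pos.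
  assert (HP1 : 0 < P1) by apply Rpower_pos.
  assert (HP2 : 0 < P2) by apply Rpower_pos.
  assert (HpP : p <= P2) by (apply Rle_Rpower_l; lra).
  assert (HPP : P1 * P2 = x + r).
  { unfold P1, P2. rewrite <- Rpower_plus. replace (1 - r + r) with 1 by ring.
    apply Rpower_1. lra. }
  assert (HG : 0 < G) by nra.
  split.
  - assert (x * g * p <= P1 * G * P2).
    { apply Rle_trans with (P1 * G * p); [nra | apply Rmult_le_compat_l; nra]. }
    apply (Rmult_le_reg_r ((g * p) * (x + r))); [nra|].
    unfold Rdiv. field_simplify; [nra | lra | nra].
  - apply (Rmult_le_reg_r (g * p)); [nra|]. unfold Rdiv.
    rewrite Rmult_assoc, Rinv_l by nra. lra.
Qed.

Lemma inv_Rpower_lim (r : R) : 0 < r -> is_lim_seq (fun k => / Rpower (INR (S k)) r) 0.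
Proof.
  intros Hr. apply (is_lim_seq_inv _ p_infty); [|discriminate].
  apply (is_lim_comp_seq (fun y => Rpower y r) (fun k => INR (S k)) p_infty p_infty).
  - unfold Rpower. apply (is_lim_comp exp (fun y => r * ln y) p_infty p_infty p_infty).
    + apply is_lim_exp_p.
    + replace p_infty with (Rbar_mult r p_infty) at 2.
      * apply is_lim_scal_l, is_lim_ln_p.
      * apply is_Rbar_mult_unique, is_Rbar_mult_sym, is_Rbar_mult_p_infty_pos. exact Hr.
    + exists 0. intros y _. discriminate.
  - exists O. intros n _. discriminate.
  - apply (is_lim_seq_incr_1 INR p_infty), is_lim_seq_INR.
Qed.

Lemma Gamma_ratio_lim (r : R) : 0 < r < 1 ->
  is_lim_seq (fun k => Gamma (INR (S k) + r) / (Gamma (INR (S k)) * Rpower (INR (S k)) r)) 1.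
Proof.
  intros Hr.
  apply (is_lim_seq_le_le_loc (fun k => 1 - r / (INR (S k) + r)) _ (fun _ => 1)).
  - exists O. intros k _. apply Gamma_ratio_bounds; [| exact Hr | apply Gamma_nat_pos].
    rewrite S_INR. pose proof (pos_INR k). lra.
  - replace 1 with (1 - r * 0) at 1 by ring.
    apply is_lim_seq_minus'; [apply is_lim_seq_const|].
    apply is_lim_seq_mult'; [apply is_lim_seq_const|].
    apply (is_lim_seq_inv _ p_infty); [|discriminate].
    apply (is_lim_seq_le_p_loc (fun k => INR (S k))).
    + exists O. intros k _. lra.
    + apply (is_lim_seq_incr_1 INR p_infty), is_lim_seq_INR.
  - apply is_lim_seq_const.
Qed.

Theorem mainTheorem15 (r : R) (hr0 : 0 < r) (hr1 : r < 1) :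
  (forall N : nat, (1 <= N)%nat ->
     ER r 2 N = / r * (Gamma (INR N + r) / (Gamma (1 + r) * Gamma (INR N)) - 1))
  /\
  is_lim_seq (fun N : nat => ER r 2 N / (Rpower (INR N) r / (r * Gamma (1 + r)))) 1.
Proof.
  pose proof (Gamma_1r_pos r ltac:(lra)) as HG1.
  split.
  - intros [|k] HN; [lia|].
    rewrite ER_closed_form, Gamma_growth by lra.
    pose proof (Gamma_nat_pos k). field. lra.
  - apply is_lim_seq_incr_1.
    (* The normalized expectation is a Gamma ratio tending to [1]
       minus [Gamma (1 + r) / (k+1)^r], which tends to [0]. *)
    apply (is_lim_seq_ext (fun k =>
             Gamma (INR (S k) + r) / (Gamma (INR (S k)) * Rpower (INR (S k)) r)
             - Gamma (1 + r) * / Rpower (INR (S k)) r)).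
    { intros k. rewrite ER_closed_form, Gamma_growth by lra.
      pose proof (Gamma_nat_pos k). pose proof (Rpower_pos (INR (S k)) r).
      field. lra. }
    replace (Finite 1) with (Finite (1 - Gamma (1 + r) * 0)) by (f_equal; ring).
    apply is_lim_seq_minus'; [apply Gamma_ratio_lim; lra|].
    apply is_lim_seq_mult'; [apply is_lim_seq_const | apply inv_Rpower_lim, hr0].
Qed.
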